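(* Let $\mathbf{x}$ be generated by an additive noise model $x_i=f_i(\mathbf{x}_{\mathrm{pa}(i)})+\epsilon_i$ over a DAG $\mathcal{G}$ with mutually independent $\epsilon_i\sim\mathcal{N}(0,\sigma^2)$, $\sigma^2>0$, and $f_i$ twice continuously differentiable, with all expectations below finite. Let $H(\mathbf{x})=-\nabla^2_{\mathbf{x}}\log p(\mathbf{x})$, let $l$ be a sink (leaf) node of $\mathcal{G}$, and for a symmetric matrix $M$ indexed by $\{1,\dots,d\}$ with $M_{ll}\neq 0$ let $\mathrm{Schur}(M)=M_{\setminus l,\setminus l}-M_{\setminus l,l}M_{ll}^{-1}M_{l,\setminus l}$. Then $$\Delta := \mathbb{E}[\mathrm{Schur}(H(\mathbf{x}))] - \mathrm{Schur}(\mathbb{E}[H(\mathbf{x})]) = -\frac{1}{\sigma^2}\,\mathrm{Cov}_{p(\mathbf{x})}\!\left(\nabla_{\mathbf{x}_{\setminus l}} f_l(\mathbf{x}_{\mathrm{pa}(l)})\right).$$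
   Context: $\mathrm{pa}(i)$ denotes the parents of node $i$ in $\mathcal{G}$; $p$ is the joint density of $\mathbf{x}$. $M_{\setminus l,\setminus l}$ is the submatrix with row and column $l$ removed, $M_{\setminus l,l}$ the $l$-th column with entry $l$ removed, $M_{l,\setminus l}$ the $l$-th row with entry $l$ removed. $\nabla_{\mathbf{x}_{\setminus l}} f_l$ is the gradient of $f_l$ (viewed as a function of $\mathbf{x}_{\setminus l}$) and $\mathrm{Cov}$ its covariance matrix under $p$. *)

From HB Require Import structures.
From mathcomp Require Import all_boot all_order all_algebra.
From mathcomp Require Import all_classical all_reals all_analysis.
From mathcomp Require Import normal_distribution.

Set Implicit Arguments.
Unset Strict Implicit.
Unset Printing Implicit Defensive.

Import Order.TTheory GRing.Theory Num.Theory.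
Import numFieldNormedType.Exports.

Local Open Scope classical_set_scope.
Local Open Scope ring_scope.

(* Points of R^d, d = n.+1, are row vectors 'rV[R]_n.+1; coordinate i of x is x 0 i. *)

Section Defs.
Context {R : realType} {n : nat}.

Definition partial (g : 'rV[R]_n.+1 -> R) (j : 'I_n.+1) : 'rV[R]_n.+1 -> R :=
  fun x => 'D_(delta_mx 0 j) g x.

Definition hessian (g : 'rV[R]_n.+1 -> R) (x : 'rV[R]_n.+1) : 'M[R]_n.+1 :=
  \matrix_(j, k) partial (partial g k) j x.

Definition C2 (g : 'rV[R]_n.+1 -> R) : Prop :=
  [/\ forall x, differentiable g x,
      forall j x, differentiable (partial g j) x
    & forall j k, continuous (partial (partial g j) k)].

(* pa i j  means  j is a parent of i (edge j -> i).  DAG = no directed cycle. *)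
Definition is_dag (pa : rel 'I_n.+1) : Prop :=
  forall i j, pa i j -> ~~ connect pa j i.

Definition is_sink (pa : rel 'I_n.+1) (l : 'I_n.+1) : Prop :=
  forall i, ~~ pa i l.

Definition depends_only_on_parents (pa : rel 'I_n.+1) (i : 'I_n.+1)
  (g : 'rV[R]_n.+1 -> R) : Prop :=
  forall x y : 'rV[R]_n.+1, (forall j, pa i j -> x 0 j = y 0 j) -> g x = g y.

Definition anm_density (sigma : R) (f : 'I_n.+1 -> 'rV[R]_n.+1 -> R)
  (x : 'rV[R]_n.+1) : R :=
  \prod_(i < n.+1) normal_pdf 0 sigma (x 0 i - f i x).

Definition neg_log_hessian (p : 'rV[R]_n.+1 -> R) (x : 'rV[R]_n.+1) : 'M[R]_n.+1 :=
  - hessian (fun y => ln (p y)) x.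

Definition schur (M : 'M[R]_n.+1) (l : 'I_n.+1) : 'M[R]_n :=
  \matrix_(a, b) (M (lift l a) (lift l b)
                  - M (lift l a) l * (M l l)^-1 * M l (lift l b)).

Definition grad_minus (l : 'I_n.+1) (g : 'rV[R]_n.+1 -> R) (x : 'rV[R]_n.+1) : 'rV[R]_n :=
  \row_a partial g (lift l a) x.

End Defs.

Section Prob.
Context {d : measure_display} {T : measurableType d} {R : realType}.

Definition mutually_independent (P : probability T R) (k : nat)
  (X : 'I_k -> T -> R) : Prop :=
  (forall i, measurable_fun setT (X i)) /\
  forall A : 'I_k -> set R, (forall i, measurable (A i)) ->
    P (\bigcap_(i in setT) (X i @^-1` A i)) = (\prod_(i < k) P (X i @^-1` A i))%E.

Definition centered_gaussian (P : probability T R) (X : T -> R) (sigma : R) : Prop :=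
  measurable_fun setT X /\
  forall A : set R, measurable A -> P (X @^-1` A) = normal_prob 0 sigma A.

Definition fin_expect (P : probability T R) (Y : T -> R) : Prop :=
  P.-integrable setT (fun w => (Y w)%:E).

Definition Emx (P : probability T R) (m m' : nat) (Y : T -> 'M[R]_(m, m')) : 'M[R]_(m, m') :=
  \matrix_(a, b) fine ('E_P[fun w => Y w a b])%E.

Definition covmx (P : probability T R) (m : nat) (Y : T -> 'rV[R]_m) : 'M[R]_m :=
  \matrix_(a, b) fine (covariance P (fun w => Y w 0 a) (fun w => Y w 0 b)).

End Prob.

(* At a sink l no structural function f_i involves x_l, so in
   log p(x) = sum_i [log c_sigma - (x_i - f_i(x))^2 / (2 sigma^2)] the variable
   x_l enters only the l-th summand, and there quadratically with leading
   coefficient -1/(2 sigma^2).  Hence, pointwise, H_ll = 1/sigma^2 and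
   H_{\l,l} = H_{l,\l} = -grad_{\l} f_l / sigma^2, so that
   Schur(H) = H_{\l,\l} - sigma^-2 grad f_l (grad f_l)^T while
   Schur(E H) = E H_{\l,\l} - sigma^-2 E[grad f_l] E[grad f_l]^T.
   Their difference is -sigma^-2 Cov(grad f_l).  Both mixed entries are
   computed directly, so no symmetry of second derivatives is needed. *)

From HB Require Import structures.
From mathcomp Require Import all_boot all_order all_algebra.
From mathcomp Require Import all_classical all_reals all_analysis.
From mathcomp Require Import normal_distribution.
From mathcomp Require Import ring.
Import Order.TTheory GRing.Theory Num.Theory.
Import numFieldNormedType.Exports.
Local Open Scope classical_set_scope.
Local Open Scope ring_scope.

Section DirectionalDerivatives.
Context {R : realType} {V : normedModType R}.

Lemma derive_quadratic_line {g : V -> R} {y v : V} {c e : R} :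
  (forall h, g (h *: v + y) = g y + h * c + h ^+ 2 * e) ->
  derivable g y v /\ 'D_v g y = c.
Proof.
move=> hg.
have quotient_cvg :
    (fun h : R => h^-1 *: ((g \o shift y) (h *: v) - g y)) @ 0^' --> c.
  have lim_c : (fun h : R => c + h * e) @ 0^' --> c + 0 * e.
    apply: cvgD; first exact: cvg_cst.
    by apply: cvgM; [apply: cvg_within_filter; exact: cvg_id | exact: cvg_cst].
  rewrite mul0r addr0 in lim_c.
  apply: cvg_trans lim_c; apply: near_eq_cvg; near=> h.
  have h0 : h != 0 by near: h; exact: nbhs_dnbhs_neq.
  rewrite /= hg (_ : g y + h * c + h ^+ 2 * e - g y = h * (c + h * e)); last by ring.
  by rewrite scalerAl -[h^-1 *: h]/(h^-1 * h) mulVf // mul1r.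
split; first by apply/cvg_ex; exists c.
exact: cvg_lim quotient_cvg.
Unshelve. all: by end_near. Qed.

Lemma derive_affine_line {g : V -> R} {y v : V} {c : R} :
  (forall h, g (h *: v + y) = g y + h * c) ->
  derivable g y v /\ 'D_v g y = c.
Proof.
by move=> hg; apply: (derive_quadratic_line (e := 0)) => h; rewrite hg mulr0 addr0.
Qed.

Lemma derive_translation_invariant {g : V -> R} {u y v : V} :
  (forall z, g (u + z) = g z) -> 'D_v g (u + y) = 'D_v g y.
Proof.
move=> hg; rewrite /derive.
suff -> : (fun h : R => h^-1 *: ((g \o shift (u + y)) (h *: v) - g (u + y)))
  = (fun h => h^-1 *: ((g \o shift y) (h *: v) - g y)) by [].
by apply/funext => h /=; rewrite addrCA !hg.
Qed.

End DirectionalDerivatives.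

Lemma ln_prod {R : realType} (k : nat) (F : 'I_k -> R) : (forall i, 0 < F i) ->
  ln (\prod_(i < k) F i) = \sum_(i < k) ln (F i).
Proof.
move=> F_gt0.
suff [] : 0 < \prod_(i < k) F i /\ ln (\prod_(i < k) F i) = \sum_(i < k) ln (F i)
  by [].
apply: (big_ind2 (fun a b => 0 < a /\ ln a = b)); first by rewrite ln1.
- move=> a1 a2 b1 b2 [a1_gt0 <-] [a2_gt0 <-]; split; first exact: mulr_gt0.
  by rewrite lnM // posrE.
- by move=> i _; split.
Qed.

Lemma ln_normal_pdf {R : realType} (m sigma t : R) : sigma != 0 ->
  ln (normal_pdf m sigma t) = ln (normal_peak sigma) - (t - m) ^+ 2 / (sigma ^+ 2 *+ 2).
Proof.
move=> s0; rewrite normal_pdfE // /normal_fun.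
by rewrite lnM ?posrE ?normal_peak_gt0 ?expR_gt0 // expRK mulNr.
Qed.

Lemma normal_pdf_gt0 {R : realType} (m sigma t : R) : sigma != 0 ->
  0 < normal_pdf m sigma t.
Proof.
by move=> s0; rewrite normal_pdfE // /normal_fun mulr_gt0 ?normal_peak_gt0 ?expR_gt0.
Qed.

Lemma coord_shift {R : realType} {n : nat} (t : R) (k i : 'I_n.+1) (y : 'rV[R]_n.+1) :
  (t *: delta_mx 0 k + y) 0 i = y 0 i + t * (i == k)%:R.
Proof. by rewrite !mxE eqxx /= addrC. Qed.

Lemma derive_coord {R : realType} {n : nat} (i : 'I_n.+1) (y v : 'rV[R]_n.+1) :
  derivable (fun z : 'rV[R]_n.+1 => z 0 i) y v /\
  'D_v (fun z : 'rV[R]_n.+1 => z 0 i) y = v 0 i.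
Proof. by apply: derive_affine_line => h; rewrite !mxE addrC. Qed.

Lemma sink_shift_invariant {R : realType} {n : nat} {pa : rel 'I_n.+1}
    {i l : 'I_n.+1} {g : 'rV[R]_n.+1 -> R} :
  depends_only_on_parents pa i g -> is_sink pa l ->
  forall t y, g (t *: delta_mx 0 l + y) = g y.
Proof.
move=> gdep lsink t y; apply: gdep => j pij; rewrite coord_shift.
have /negbTE -> : j != l by apply: contraNneq (lsink i) => <-.
by rewrite mulr0 addr0.
Qed.

Section SinkHessian.
Context {R : realType} {n : nat} (f : 'I_n.+1 -> 'rV[R]_n.+1 -> R)
  (sigma : R) (l : 'I_n.+1).
Hypothesis f_free : forall i t y, f i (t *: delta_mx 0 l + y) = f i y.
Hypothesis f_diff : forall i y, differentiable (f i) y.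
Hypothesis sigma_neq0 : sigma != 0.
Local Notation V := 'rV[R]_n.+1.

Let e : V := delta_mx 0 l.
Let s2 : R := sigma ^+ 2 *+ 2.
Let resid (i : 'I_n.+1) : V -> R := (fun z : V => z 0 i) - f i.
Let log_factor (i : 'I_n.+1) : V -> R :=
  cst (ln (normal_peak sigma)) - s2^-1 \*: (resid i * resid i).
Let logp : V -> R := fun y => ln (anm_density sigma f y).
Let rest : V -> R := logp - log_factor l.

Let scalerE (a b : R) : a *: b = a * b. Proof. by []. Qed.
Let residE i z : resid i z = z 0 i - f i z. Proof. by []. Qed.
Let log_factorE i z :
  log_factor i z = ln (normal_peak sigma) - s2^-1 * (resid i z * resid i z).
Proof. by []. Qed.

Let logpE : logp = \sum_(i < n.+1) log_factor i.
Proof.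
apply/funext => y; rewrite fct_sumE /logp /anm_density ln_prod; last first.
  by move=> i; exact: normal_pdf_gt0.
apply: eq_bigr => i _; rewrite ln_normal_pdf // subr0.
by rewrite /resid /= expr2 mulrC.
Qed.

Let resid_shift i t y : resid i (t *: e + y) = resid i y + t * (i == l)%:R.
Proof. by rewrite !residE /e f_free coord_shift addrAC. Qed.

Let rest_shift t y : rest (t *: e + y) = rest y.
Proof.
have restE z : rest z = \sum_(i < n.+1 | i != l) log_factor i z.
  rewrite (_ : rest z = logp z - log_factor l z) // logpE fct_sumE.
  by rewrite (bigD1 l) //= addrAC subrr add0r.
rewrite !restE; apply: eq_bigr => i il.
by rewrite !log_factorE resid_shift (negbTE il) mulr0 addr0.
Qed.

Let logp_shift t y :
  logp (t *: e + y) = logp y + t * (- resid l y / sigma ^+ 2) + t ^+ 2 * (- s2^-1).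
Proof.
have logp_split z : logp z = rest z + log_factor l z by rewrite /rest subrK.
rewrite !logp_split rest_shift !log_factorE resid_shift eqxx mulr1 /s2.
by field.
Qed.

Let derive_resid i z v :
  derivable (resid i) z v /\ 'D_v (resid i) z = v 0 i - 'D_v (f i) z.
Proof.
have [coord_d coord_D] := derive_coord i z v.
have fd : derivable (f i) z v by exact: diff_derivable.
by split; [exact: derivableB | rewrite deriveB // coord_D].
Qed.

Let derive_log_factor i z v : derivable (log_factor i) z v /\
  'D_v (log_factor i) z = - (resid i z * 'D_v (resid i) z) / sigma ^+ 2.
Proof.
have [rd _] := derive_resid i z v.
have rrd : derivable (resid i * resid i) z v by exact: derivableM.
split; first exact: derivableB (derivable_cst _ z v) (derivableZ rrd).
rewrite deriveB; [|exact: derivable_cst|exact: derivableZ].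
by rewrite derive_cst deriveZ // deriveM // !scalerE /s2; field.
Qed.

Let derivable_logp z v : derivable logp z v.
Proof.
by rewrite logpE; apply: derivable_sum => i; exact: (derive_log_factor i z v).1.
Qed.

Let lift_coord (a : 'I_n) : (delta_mx 0 (lift l a) : V) 0 l = 0.
Proof. by rewrite mxE eqxx /= (negbTE (neq_lift l a)). Qed.

Let partial_logp_l : partial logp l = fun z => - resid l z / sigma ^+ 2.
Proof.
apply/funext => z; rewrite /partial.
exact: (derive_quadratic_line (fun h => logp_shift h z)).2.
Qed.

Let partial2_logp_ll y : partial (partial logp l) l y = - (sigma ^+ 2)^-1.
Proof.
rewrite partial_logp_l /partial; apply: (derive_affine_line _).2 => h.
by rewrite resid_shift eqxx mulr1; field.
Qed.

Let partial2_logp_lift_l a y :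
  partial (partial logp l) (lift l a) y = (sigma ^+ 2)^-1 * partial (f l) (lift l a) y.
Proof.
rewrite partial_logp_l.
have -> : (fun z => - resid l z / sigma ^+ 2) = (- (sigma ^+ 2)^-1) \*: resid l.
  by apply/funext => z /=; rewrite scalerE mulrC mulrN mulNr.
rewrite /partial deriveZ; last exact: (derive_resid l y _).1.
by rewrite (derive_resid l y _).2 lift_coord scalerE; ring.
Qed.

Let partial2_logp_l_lift b y :
  partial (partial logp (lift l b)) l y = (sigma ^+ 2)^-1 * partial (f l) (lift l b) y.
Proof.
set v : V := delta_mx 0 (lift l b).
have partial_b z :
    'D_v logp z = 'D_v rest z + resid l z * 'D_v (f l) z / sigma ^+ 2.
  have -> : logp = rest + log_factor l by rewrite /rest subrK.
  rewrite deriveD; last 2 first.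
  - exact: derivableB (derivable_logp z v) (derive_log_factor l z v).1.
  - exact: (derive_log_factor l z v).1.
  rewrite (derive_log_factor l z v).2 (derive_resid l z v).2 lift_coord sub0r.
  by rewrite mulrN opprK.
rewrite /partial; apply: (derive_affine_line _).2 => h.
(* Along [e] only the residual moves: [rest] and [f l] are [e]-invariant. *)
rewrite !partial_b (derive_translation_invariant (rest_shift h)).
rewrite (derive_translation_invariant (f_free l h)).
by rewrite resid_shift eqxx mulr1; field.
Qed.

Local Notation H := (neg_log_hessian (anm_density sigma f)).

Lemma neg_log_hessian_anm_ll y : H y l l = (sigma ^+ 2)^-1.
Proof. by rewrite /neg_log_hessian /hessian !mxE partial2_logp_ll opprK. Qed.

Lemma neg_log_hessian_anm_lift_l y a :
  H y (lift l a) l = - ((sigma ^+ 2)^-1 * grad_minus l (f l) y 0 a).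
Proof. by rewrite /neg_log_hessian /hessian /grad_minus !mxE partial2_logp_lift_l. Qed.

Lemma neg_log_hessian_anm_l_lift y b :
  H y l (lift l b) = - ((sigma ^+ 2)^-1 * grad_minus l (f l) y 0 b).
Proof. by rewrite /neg_log_hessian /hessian /grad_minus !mxE partial2_logp_l_lift. Qed.

End SinkHessian.

Lemma schur_rank_one_border {R : realType} {n : nat} {M : 'M[R]_n.+1}
    {l : 'I_n.+1} {c : R} {u : 'rV[R]_n} :
  M l l = c ->
  (forall a, M (lift l a) l = - (c * u 0 a)) ->
  (forall b, M l (lift l b) = - (c * u 0 b)) ->
  forall a b, schur M l a b = M (lift l a) (lift l b) - c * (u 0 a * u 0 b).
Proof.
move=> Mll Mal Mlb a b; rewrite /schur mxE Mll Mal Mlb.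
have [->|c0] := eqVneq c 0; first by rewrite !(mul0r, oppr0, mulr0).
by field.
Qed.

Section ExpectedSchur.
Context {d : measure_display} {T : measurableType d} {R : realType}
  (P : probability T R).

Let fin_expectE {Y : T -> R} : fin_expect P Y -> ('E_P[Y] = (fine 'E_P[Y])%:E)%E.
Proof. by move=> hY; rewrite fineK // expectation_fin_num //; exact/Lfun1_integrable. Qed.

Lemma Emx_schur_rank_one_border {n : nat} (M : T -> 'M[R]_n.+1) (l : 'I_n.+1)
    (c : R) (u : T -> 'rV[R]_n) :
  (forall w, M w l l = c) ->
  (forall w a, M w (lift l a) l = - (c * u w 0 a)) ->
  (forall w b, M w l (lift l b) = - (c * u w 0 b)) ->
  (forall j k, fin_expect P (fun w => M w j k)) ->
  (forall a, fin_expect P (fun w => u w 0 a)) ->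
  (forall a b, fin_expect P (fun w => u w 0 a * u w 0 b)) ->
  Emx P (fun w => schur (M w) l) - schur (Emx P M) l = - c *: covmx P u.
Proof.
move=> Mll Mal Mlb M_fin u_fin uu_fin; apply/matrixP => a b; rewrite !mxE.
have L1 (Y : T -> R) : fin_expect P Y -> Y \in Lfun P 1 by move=> ?; exact/Lfun1_integrable.
set ua := fun w => u w 0 a; set ub := fun w => u w 0 b.
have E_schur : ('E_P[fun w => schur (M w) l a b] =
    'E_P[fun w => M w (lift l a) (lift l b)] - c%:E * 'E_P[ua * ub])%E.
  rewrite (_ : (fun w => _) = (fun w => M w (lift l a) (lift l b)) \- (c \o* (ua * ub))).
    rewrite expectationB; [|exact: L1|by apply: Lfun_scale => //; exact: L1 (uu_fin a b)].
    by rewrite expectationZl //; exact: L1 (uu_fin a b).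
  apply/funext => w /=.
  by rewrite (schur_rank_one_border (Mll w) (Mal w) (Mlb w)) mulrC.
have E_ll : ('E_P[fun w => M w l l] = c%:E)%E.
  by rewrite (_ : (fun w => _) = cst c) ?expectation_cst //; apply/funext => w; exact: Mll.
have E_border (i : 'I_n) (Mi : T -> R) : (forall w, Mi w = - (c * u w 0 i)) ->
    ('E_P[Mi] = (- c)%:E * 'E_P[(fun w => u w 0 i)%R])%E.
  move=> MiE; rewrite -expectationZl ?L1 //; congr expectation.
  by apply/funext => w /=; rewrite MiE mulrN mulrC.
rewrite covarianceE; last 3 first.
- exact: L1 (u_fin a).
- exact: L1 (u_fin b).
- exact: L1 (uu_fin a b).
rewrite E_schur E_ll (E_border a _ (Mal^~ a)) (E_border b _ (Mlb^~ b)).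
rewrite (fin_expectE (M_fin _ _)) (fin_expectE (uu_fin a b)).
rewrite (fin_expectE (u_fin a)) (fin_expectE (u_fin b)) /=.
have [->|c0] := eqVneq c 0; first by rewrite oppr0 !(mul0r, subr0) subrr.
by field.
Qed.

End ExpectedSchur.

Theorem proposition3p4 (R : realType) (n : nat) (pa : rel 'I_n.+1)
  (f : 'I_n.+1 -> 'rV[R]_n.+1 -> R) (sigma : R)
  (dT : measure_display) (T : measurableType dT) (P : probability T R)
  (eps : 'I_n.+1 -> T -> R) (x : T -> 'rV[R]_n.+1) (l : 'I_n.+1) :
  is_dag pa ->
  (forall i, depends_only_on_parents pa i (f i)) ->
  (forall i, C2 (f i)) ->
  0 < sigma ->
  mutually_independent P eps ->
  (forall i, centered_gaussian P (eps i) sigma) ->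
  (forall w i, x w 0 i = f i (x w) + eps i w) ->
  is_sink pa l ->
  let H := neg_log_hessian (anm_density sigma f) in
  (forall j k, fin_expect P (fun w => H (x w) j k)) ->
  (forall a b, fin_expect P (fun w => schur (H (x w)) l a b)) ->
  (forall a, fin_expect P (fun w => grad_minus l (f l) (x w) 0 a)) ->
  (forall a b, fin_expect P (fun w => grad_minus l (f l) (x w) 0 a
                                      * grad_minus l (f l) (x w) 0 b)) ->
  Emx P (fun w => schur (H (x w)) l) - schur (Emx P (fun w => H (x w))) l
  = - (sigma ^+ 2)^-1 *: covmx P (fun w => grad_minus l (f l) (x w)).
Proof.
(* The DAG and noise hypotheses only identify [anm_density] as the density of
   [x]; the Hessian entries are computed pointwise, so they are not needed, nor
   is integrability of the Schur complement, which follows from the others. *)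
move=> _ f_dep f_C2 sigma_gt0 _ _ _ l_sink H H_fin _ grad_fin grad2_fin.
have f_free i := sink_shift_invariant (f_dep i) l_sink.
have f_diff i y : differentiable (f i) y by case: (f_C2 i).
have sigma_neq0 : sigma != 0 by rewrite gt_eqF.
apply: Emx_schur_rank_one_border => // w.
- exact: neg_log_hessian_anm_ll.
- exact: neg_log_hessian_anm_lift_l.
- exact: neg_log_hessian_anm_l_lift.
Qed.
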